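(* Let $Q$ be a hierarchical Boolean self-join-free conjunctive query. Then for every database $D$, a minimal-length formula equivalent to $\mathrm{Prov}(Q,D)$ can be computed in polynomial time in $|D|$; in particular $\mathrm{FACT}(Q)$ is in PTIME.
   Context: Let $Q=\exists\vec x\,(R_1(\vec x_1)\wedge\cdots\wedge R_m(\vec x_m))$ be a Boolean self-join-free conjunctive query. $Q$ is hierarchical if for any two variables $x,y$, with $\mathrm{at}(x)$ the set of atoms containing $x$, one has $\mathrm{at}(x)\subseteq\mathrm{at}(y)$, $\mathrm{at}(x)\supseteq\mathrm{at}(y)$, or $\mathrm{at}(x)\cap\mathrm{at}(y)=\emptyset$. For a database $D$ whose tuples are identified with distinct Boolean variables, a witness is an assignment $\theta$ of the query variables with $R_i(\theta(\vec x_i))\in D$ for all $i$, and $\mathrm{Prov}(Q,D)=\bigvee_\theta\bigwedge_i R_i(\theta(\vec x_i))$. For a formula $\varphi$ built with $\wedge,\vee$, $\mathrm{len}(\varphi)$ is the number of variable occurrences and $\mathrm{var}(\varphi)$ the set of variables. $(D,k)\in\mathrm{FACT}(Q)$ iff some $\varphi'\equiv\mathrm{Prov}(Q,D)$ has $\mathrm{len}(\varphi')\le|\mathrm{var}(\varphi')|+k$; $Q$ is fixed. *)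

From mathcomp Require Import all_boot.
Set Implicit Arguments. Unset Strict Implicit. Unset Printing Implicit Defensive.

(* Atom i uses relation symbol i (all distinct: self-join-free by
   construction); its argument list is a sequence of query variables (nats). *)
Record query := Query { atoms : seq (seq nat) }.

Definition natoms (Q : query) : nat := size (atoms Q).
Definition atom (Q : query) (i : nat) : seq nat := nth [::] (atoms Q) i.

Definition at_ (Q : query) (x : nat) : pred nat :=
  fun i => (i < natoms Q) && (x \in atom Q i).

Definition hierarchical (Q : query) : Prop :=
  forall x y : nat,
    (forall i, at_ Q x i -> at_ Q y i) \/
    (forall i, at_ Q y i -> at_ Q x i) \/
    (forall i, ~ (at_ Q x i /\ at_ Q y i)).

(* A fact R_i(c) is a pair (i, c); constants are nats.  A database is a
   duplicate-free list of facts; each fact is its own Boolean variable. *)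
Definition fact := (nat * seq nat)%type.
Definition database := seq fact.

(* Formulas built with /\ and \/ over Boolean variables (facts); the
   constants true/false (of length 0) are included so that Prov of an
   instance with no witness (= false) is also representable. *)
Inductive form :=
| FVar of fact
| FAnd of form & form
| FOr of form & form
| FTrue
| FFalse.

Fixpoint feval (nu : fact -> bool) (phi : form) : bool :=
  match phi with
  | FVar f => nu f
  | FAnd a b => feval nu a && feval nu b
  | FOr a b => feval nu a || feval nu b
  | FTrue => true
  | FFalse => false
  end.

Fixpoint occ (phi : form) : seq fact :=
  match phi with
  | FVar f => [:: f]
  | FAnd a b | FOr a b => occ a ++ occ b
  | FTrue | FFalse => [::]
  end.

Definition len (phi : form) : nat := size (occ phi).
Definition nvar (phi : form) : nat := size (undup (occ phi)).

Definition prov_holds (Q : query) (D : database) (nu : fact -> bool) : Prop :=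
  exists theta : nat -> nat,
    forall i, i < natoms Q ->
      let f := (i, map theta (atom Q i)) in f \in D /\ nu f.

Definition equiv_prov (Q : query) (D : database) (phi : form) : Prop :=
  forall nu : fact -> bool, feval nu phi <-> prov_holds Q D nu.

Definition minimal_prov (Q : query) (D : database) (phi : form) : Prop :=
  equiv_prov Q D phi /\
  forall psi, equiv_prov Q D psi -> len phi <= len psi.

Definition FACT (Q : query) (D : database) (k : nat) : Prop :=
  exists phi, equiv_prov Q D phi /\ len phi <= nvar phi + k.

(* Data are binary trees; unit-cost commands (a standard reasonable model:
   polynomially equivalent to Turing machines). *)
Inductive tree := TNil | TCons of tree & tree.

Fixpoint tree_size (t : tree) : nat :=
  match t with TNil => 1 | TCons a b => (tree_size a + tree_size b).+1 end.

Inductive expr :=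
| EVar of nat
| ENil
| ECons of expr & expr
| EHd of expr
| ETl of expr.

Inductive cmd :=
| CAssign of nat & expr
| CSeq of cmd & cmd
| CWhile of expr & cmd.

Definition store := nat -> tree.

Fixpoint eeval (s : store) (e : expr) : tree :=
  match e with
  | EVar x => s x
  | ENil => TNil
  | ECons a b => TCons (eeval s a) (eeval s b)
  | EHd a => match eeval s a with TCons l _ => l | TNil => TNil end
  | ETl a => match eeval s a with TCons _ r => r | TNil => TNil end
  end.

Definition upd (s : store) (x : nat) (v : tree) : store :=
  fun y => if y == x then v else s y.

Inductive exec : cmd -> store -> nat -> store -> Prop :=
| ExAssign s x e : exec (CAssign x e) s 1 (upd s x (eeval s e))
| ExSeq c1 c2 s t1 s1 t2 s2 :
    exec c1 s t1 s1 -> exec c2 s1 t2 s2 -> exec (CSeq c1 c2) s (t1 + t2) s2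
| ExWhileF e c s : eeval s e = TNil -> exec (CWhile e c) s 1 s
| ExWhileT e c s t1 s1 t2 s2 :
    eeval s e <> TNil -> exec c s t1 s1 -> exec (CWhile e c) s1 t2 s2 ->
    exec (CWhile e c) s (t1 + t2).+1 s2.

Definition init_store (inp : tree) : store :=
  fun x => if x == 0 then inp else TNil.

Definition runs (p : cmd) (inp : tree) (t : nat) (out : tree) : Prop :=
  exists s', exec p (init_store inp) t s' /\ s' 0 = out.

Fixpoint enc_list (l : seq tree) : tree :=
  match l with [::] => TNil | x :: r => TCons x (enc_list r) end.

Definition enc_bool (b : bool) : tree := if b then TCons TNil TNil else TNil.

Fixpoint bits (fuel n : nat) : seq bool :=
  match fuel with
  | 0 => [::]
  | fuel'.+1 => if n == 0 then [::] else odd n :: bits fuel' n./2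
  end.

Definition enc_nat (n : nat) : tree := enc_list (map enc_bool (bits n n)).

Definition enc_fact (f : fact) : tree :=
  TCons (enc_nat f.1) (enc_list (map enc_nat f.2)).

Definition enc_db (D : database) : tree := enc_list (map enc_fact D).

Fixpoint enc_form (phi : form) : tree :=
  match phi with
  | FVar f => TCons (enc_nat 0) (enc_fact f)
  | FAnd a b => TCons (enc_nat 1) (TCons (enc_form a) (enc_form b))
  | FOr a b => TCons (enc_nat 2) (TCons (enc_form a) (enc_form b))
  | FTrue => TCons (enc_nat 3) TNil
  | FFalse => TCons (enc_nat 4) TNil
  end.

From HB Require Import structures.
From mathcomp Require Import all_boot zify.
Set Implicit Arguments. Unset Strict Implicit. Unset Printing Implicit Defensive.

(* For a hierarchical query, pick an unbound variable x
   occurring in the most atoms; by the hierarchical property every atom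
   sharing an unbound variable with an atom containing x contains x itself.
   Hence the atoms split into ground ones, those containing x, and those
   sharing no unbound variable with the latter, and recursion yields the plan
   (ground atoms) /\ (\/_{a in dom} plan[x := a]) /\ (rest), which evaluates
   on D to a formula in which every fact occurs at most once
   ([mkplan_realizes]).  In a constant-free read-once formula every variable
   is essential, so every equivalent formula contains all its variables: the
   formula has minimal length and len = nvar ([read_once_minimal],
   [theformula_minimal]); in particular (D, k) is in FACT(Q) for every k. *)

Definition wp (c : cmd) (s : store) (P : nat -> store -> Prop) : Prop :=
  exists t s', exec c s t s' /\ P t s'.

Lemma wp_weaken c s (P P' : nat -> store -> Prop) :
  (forall t s', P t s' -> P' t s') -> wp c s P -> wp c s P'.
Proof. by move=> H [t [s' [E HP]]]; exists t, s'; split => //; apply: H. Qed.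

Lemma wp_assign x e s (P : nat -> store -> Prop) :
  P 1 (upd s x (eeval s e)) -> wp (CAssign x e) s P.
Proof. by move=> H; exists 1, (upd s x (eeval s e)); split => //; constructor. Qed.

Lemma wp_seq c1 c2 s (P : nat -> store -> Prop) :
  wp c1 s (fun t1 s1 => wp c2 s1 (fun t2 s2 => P (t1 + t2) s2)) ->
  wp (CSeq c1 c2) s P.
Proof.
move=> [t1 [s1 [E1 [t2 [s2 [E2 HP]]]]]].
by exists (t1 + t2), s2; split => //; econstructor; eauto.
Qed.

Lemma wp_assign_seq x e c s (P : nat -> store -> Prop) :
  wp c (upd s x (eeval s e)) (fun t s' => P t.+1 s') ->
  wp (CSeq (CAssign x e) c) s P.
Proof. by move=> H; apply: wp_seq; apply: wp_assign. Qed.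

Lemma wp_while e c (I : store -> Prop) (phi : store -> nat) s :
  I s ->
  (forall s, I s -> eeval s e <> TNil ->
     wp c s (fun t s' => I s' /\ t.+1 + phi s' <= phi s)) ->
  wp (CWhile e c) s (fun t s' => I s' /\ eeval s' e = TNil /\ t <= phi s + 1).
Proof.
move=> Is Hbody; have [n Hn] : exists n, phi s <= n by exists (phi s).
elim: n s Hn Is => [|n IH] s Hn Is; case E: (eeval s e) => [|l r].
- by exists 1, s; split; [exact: ExWhileF | do 2 (split => //); lia].
- have [t1 [s1 [_ [_ Hc]]]] := Hbody s Is (ltac:(by rewrite E)); lia.
- by exists 1, s; split; [exact: ExWhileF | do 2 (split => //); lia].
have [t1 [s1 [E1 [I1 Hc]]]] := Hbody s Is (ltac:(by rewrite E)).
have [t2 [s2 [E2 [I2 [H2 Ht2]]]]] := IH s1 ltac:(lia) I1.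
exists (t1 + t2).+1, s2; split; first by econstructor; eauto; rewrite E.
by do 2 (split => //); lia.
Qed.

(* A conditional, encoded with a loop that runs at most once on the flag
   register [f]. *)
Definition IfT (f : nat) (e : expr) (c : cmd) : cmd :=
  CSeq (CAssign f e) (CWhile (EVar f) (CSeq c (CAssign f ENil))).

Lemma wp_if f e c s (P : nat -> store -> Prop) :
  (eeval s e <> TNil ->
     wp c (upd s f (eeval s e)) (fun t s1 => P (t + 4) (upd s1 f TNil))) ->
  (eeval s e = TNil -> P 2 (upd s f TNil)) ->
  wp (IfT f e c) s P.
Proof.
move=> Hthen Helse; case E: (eeval s e) => [|l r].
  exists (1 + 1), (upd s f TNil); split; last by apply: Helse.
  econstructor; first by constructor.
  by rewrite E; constructor; rewrite /= /upd eqxx.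
have [t1 [s1 [E1 HP]]] := Hthen ltac:(by rewrite E).
exists (1 + ((t1 + 1) + 1).+1), (upd s1 f TNil); split; last first.
  by have -> : 1 + ((t1 + 1) + 1).+1 = t1 + 4 by lia.
econstructor; first by constructor.
rewrite E in E1 *; econstructor.
- by rewrite /= /upd eqxx.
- by econstructor; [exact: E1 | constructor].
- by apply: ExWhileF; rewrite /= /upd eqxx.
Qed.

Definition frame (W : pred nat) (s s' : store) := forall q, ~~ W q -> s' q = s q.

Lemma frame_refl (W : pred nat) s : frame W s s. Proof. by []. Qed.

Lemma frame_trans (W : pred nat) s1 s2 s3 :
  frame W s1 s2 -> frame W s2 s3 -> frame W s1 s3.
Proof. by move=> h1 h2 q hq; rewrite h2 // h1. Qed.

Lemma frame_mono (W W' : pred nat) s s' :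
  (forall q, W q -> W' q) -> frame W s s' -> frame W' s s'.
Proof. by move=> h f q hq; apply: f; apply: contra hq; exact: h. Qed.

Arguments upd s x v y /.

Lemma frame_upd (W : pred nat) s s' x v : frame W s s' -> W x -> frame W s (upd s' x v).
Proof. by move=> h hx q hq; rewrite /= ifN ?h //; apply: contraNneq hq => ->. Qed.

Ltac frm := repeat (apply: frame_upd; last by compute); exact: frame_refl.

Fixpoint teqb (a b : tree) : bool :=
  match a, b with
  | TNil, TNil => true
  | TCons a1 a2, TCons b1 b2 => teqb a1 b1 && teqb a2 b2
  | _, _ => false
  end.

Lemma teqbP : Equality.axiom teqb.
Proof.
elim=> [|a1 IH1 a2 IH2] [|b1 b2] /=; try by constructor.
case: IH1 => [->|h]; last by constructor; case.
by case: IH2 => [->|h]; constructor; [|case].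
Qed.
HB.instance Definition _ := hasDecEq.Build tree teqbP.

Definition TT := TCons TNil TNil.
Definition ETT := ECons ENil ENil.

(* Scratch registers of the tree-equality test (all even; odd registers are
   reserved for query variables, register 0 for input and output). *)
Notation rStack := 2. Notation rPair := 4. Notation rL := 6. Notation rR := 8.
Notation rBoth := 10. Notation rEq := 12. Notation rFlag := 14.
Definition teq_temps : pred nat :=
  fun q => q \in [:: rStack; rPair; rL; rR; rBoth; rEq; rFlag].

(* Tree equality by an explicit stack of pairs still to be compared. *)
Definition encps (ps : seq (tree * tree)) : tree :=
  enc_list (map (fun p => TCons p.1 p.2) ps).

(* Total size of the left components on the stack: the loop variant. *)
Fixpoint stsz (t : tree) : nat :=
  match t with
  | TCons p rest => match p with TCons a _ => tree_size a | TNil => 0 end + stsz rest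
  | TNil => 0
  end.

(* One step: pop a pair; two nodes push their children, a node against a
   leaf clears the result register [rEq]. *)
Definition TEQbody : cmd :=
  CSeq (CAssign rPair (EHd (EVar rStack)))
 (CSeq (CAssign rStack (ETl (EVar rStack)))
 (CSeq (CAssign rL (EHd (EVar rPair)))
 (CSeq (CAssign rR (ETl (EVar rPair)))
 (CSeq (CAssign rBoth ETT)
 (CSeq (IfT rFlag (EVar rL) (IfT rFlag (EVar rR)
          (CSeq (CAssign rStack (ECons (ECons (EHd (EVar rL)) (EHd (EVar rR)))
                                (ECons (ECons (ETl (EVar rL)) (ETl (EVar rR))) (EVar rStack))))
                (CAssign rBoth ENil))))
 (CSeq (IfT rFlag (EVar rL) (IfT rFlag (EVar rBoth) (CAssign rEq ENil)))
       (IfT rFlag (EVar rR) (IfT rFlag (EVar rBoth) (CAssign rEq ENil))))))))).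

Definition TEQ (x y : nat) : cmd :=
  CSeq (CAssign rStack (ECons (ECons (EVar x) (EVar y)) ENil))
 (CSeq (CAssign rEq ETT)
       (CWhile (EVar rStack) TEQbody)).

Ltac step := match goal with
 | |- wp (CSeq (CAssign _ _) _) _ _ => apply: wp_assign_seq
 | |- wp (CSeq _ _) _ _ => apply: wp_seq
 | |- wp (CAssign _ _) _ _ => apply: wp_assign
 | |- wp (IfT _ _ _) _ _ => apply: wp_if; simpl;
        [ let H := fresh "H" in intro H; try (by case: (H erefl))
        | let H := fresh "H" in intro H; try (discriminate H) ]
 end; rewrite /=.

Definition TEQbody_post (s0 : store) (a0 b0 : tree) ps (t : nat) (s' : store) : Prop :=
  frame teq_temps s0 s' /\ t <= 45 /\
    exists nw, s' rStack = encps (nw ++ ps) /\ stsz (s' rStack) + 1 <= stsz (s0 rStack) /\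
      ((s' rEq = s0 rEq /\ (a0 == b0) = all (fun p => p.1 == p.2) nw) \/
       (s' rEq = TNil /\ a0 != b0)).

Lemma TEQbody_spec s a0 b0 ps :
  s rStack = encps ((a0, b0) :: ps) -> wp TEQbody s (TEQbody_post s a0 b0 ps).
Proof.
move=> Hst; rewrite /TEQbody.
do 5 step; rewrite Hst /=.
case: a0 Hst => [|a1 a2] Hst; case: b0 Hst => [|b1 b2] Hst; repeat step.
- split; [frm|]; split; [lia|]; exists [::]; split => //.
  by split; [rewrite Hst /=; lia | left].
- split; [frm|]; split; [lia|]; exists [::]; split => //.
  by split; [rewrite Hst /=; lia | right].
- split; [frm|]; split; [lia|]; exists [::]; split => //.
  by split; [rewrite Hst /=; lia | right].
- split; [frm|]; split; [lia|]; exists [:: (a1, b1); (a2, b2)]; split => //.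
  by split; [rewrite Hst /=; lia | left; split => //=; rewrite andbT].
Qed.

Definition TEQ_inv (s : store) (a b : tree) (s' : store) : Prop :=
  frame teq_temps s s' /\ exists ps, s' rStack = encps ps /\
   ((s' rEq = TT /\ (a == b) = all (fun p => p.1 == p.2) ps) \/
    (s' rEq = TNil /\ a != b)).

Lemma TEQ_inv_step s a b s2 :
  TEQ_inv s a b s2 -> eeval s2 (EVar rStack) <> TNil ->
  wp TEQbody s2 (fun t s' => TEQ_inv s a b s' /\ t.+1 + 50 * stsz (s' rStack) <= 50 * stsz (s2 rStack)).
Proof.
move=> [fr2 [ps [Hst Hr]]] hne.
case: ps Hst Hr => [|[a0 b0] ps] Hst Hr; first by rewrite /= Hst in hne.
apply: wp_weaken; last exact: TEQbody_spec Hst.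
move=> t s3 [fr3 [ht [nw [Hst3 [Hsz Hcase]]]]].
split; last by lia.
split; first exact: frame_trans fr2 fr3.
exists (nw ++ ps); split => //.
case: Hcase => [[e1 e2]|[e1 e2]]; case: Hr => [[r1 r2]|[r1 r2]].
- by left; rewrite e1 r2 /= e2 all_cat.
- by right; rewrite e1.
- by right; split => //; rewrite r2 /= (negbTE e2).
- by right.
Qed.

Lemma TEQ_spec x y s : ~~ teq_temps x -> ~~ teq_temps y ->
  wp (TEQ x y) s (fun t s' => s' rEq = enc_bool (s x == s y) /\
     frame teq_temps s s' /\ t <= 50 * tree_size (s x) + 3).
Proof.
move=> hx hy; rewrite /TEQ; apply: wp_assign_seq; apply: wp_assign_seq.
set s1 := upd _ rEq _.
apply: wp_weaken; last first.
  apply: (@wp_while _ _ (TEQ_inv s (s x) (s y)) (fun s' => 50 * stsz (s' rStack))).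
    split; first by rewrite /s1; frm.
    by exists [:: (s x, s y)]; split; [rewrite /s1 /= | left; rewrite /= andbT].
  by move=> s2; apply: TEQ_inv_step.
move=> t s' [[fr [ps [Hst Hr]]] [Hnil ht]].
case: ps Hst Hr => [|? ?] Hst Hr; last by rewrite /= Hst in Hnil.
split.
  by case: Hr => [[-> ->]|[-> /negbTE ->]].
split; first by move=> q hq; rewrite fr // /s1 /= !ifN //; apply: contraNneq hq => ->.
have : stsz (s1 rStack) = tree_size (s x) by rewrite /s1 /= addn0.
lia.
Qed.

Notation rRest := 16. Notation rFound := 18. Notation rElem := 20.
Definition mem_temps : pred nat := fun q => teq_temps q || (q \in [:: rRest; rFound; rElem]).

Definition MEM (x l : nat) : cmd :=
  CSeq (CAssign rRest (EVar l))
 (CSeq (CAssign rFound ENil)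
  (CWhile (EVar rRest)
    (CSeq (CAssign rElem (EHd (EVar rRest)))
    (CSeq (CAssign rRest (ETl (EVar rRest)))
    (CSeq (TEQ rElem x)
          (IfT rFlag (EVar rEq) (CAssign rFound ETT))))))).

(* Cost bound of scanning a list: a comparison per element. *)
Fixpoint lsum (t : tree) : nat :=
  match t with TCons e r => 50 * tree_size e + 11 + lsum r | TNil => 0 end.

Definition MEM_inv (s : store) (x : nat) (L : seq tree) (s' : store) : Prop :=
  frame mem_temps s s' /\ exists L1 L2, L = L1 ++ L2 /\
   s' rRest = enc_list L2 /\ s' rFound = enc_bool (s x \in L1).

Lemma MEM_inv_step x s L s2 : ~~ mem_temps x ->
  MEM_inv s x L s2 -> eeval s2 (EVar rRest) <> TNil ->
  wp (CSeq (CAssign rElem (EHd (EVar rRest))) (CSeq (CAssign rRest (ETl (EVar rRest)))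
      (CSeq (TEQ rElem x) (IfT rFlag (EVar rEq) (CAssign rFound ETT))))) s2
    (fun t s' => MEM_inv s x L s' /\ t.+1 + lsum (s' rRest) <= lsum (s2 rRest)).
Proof.
move=> hx [fr2 [L1 [L2 [eL [hRest hFound]]]]] hne.
case: L2 eL hRest => [|e L2] eL hRest; first by rewrite /= hRest in hne.
have x_not_teq : ~~ teq_temps x by apply: contra hx => h; rewrite /mem_temps h.
apply: wp_assign_seq; apply: wp_assign_seq; apply: wp_seq.
apply: wp_weaken; last exact: TEQ_spec.
move=> t1 s3 [r3 [fr3 ht3]]; move: ht3; rewrite /= hRest /= => ht3.
have x2 : s2 x = s x by apply: fr2.
have [x_rest x_elem] : x != rRest /\ x != rElem by split; apply: contraNneq hx => ->.
move: r3; rewrite /= hRest /= (negbTE x_rest) (negbTE x_elem) x2 => r3.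
have eRest : s3 rRest = enc_list L2 by rewrite fr3 //= hRest.
have frA : frame mem_temps s s3.
  apply: frame_trans; last by apply: frame_mono fr3 => q hq; rewrite /mem_temps hq.
  by apply: frame_upd; [apply: frame_upd|].
have eL' : L = (L1 ++ [:: e]) ++ L2 by rewrite eL -catA.
apply: wp_if => [hr|hr]; rewrite /= r3 in hr.
  have ee : e == s x by move: hr; case: (e == s x).
  apply: wp_assign; split; last by rewrite /= eRest /=; lia.
  split; first by repeat (apply: frame_upd; last by []); exact: frA.
  exists (L1 ++ [:: e]), L2; split => //; split; first by rewrite /= eRest.
  by rewrite /= mem_cat inE eq_sym ee orbT.
have ee : (e == s x) = false by move: hr; case: (e == s x).
split; last by rewrite /= eRest /=; lia.
split; first by repeat (apply: frame_upd; last by []); exact: frA.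
exists (L1 ++ [:: e]), L2; split => //; split; first by rewrite /= eRest.
by rewrite /= fr3 //= hFound mem_cat inE eq_sym ee orbF.
Qed.

Lemma MEM_spec x l s L : ~~ mem_temps x -> ~~ mem_temps l -> s l = enc_list L ->
  wp (MEM x l) s (fun t s' => s' rFound = enc_bool (s x \in L) /\
     frame mem_temps s s' /\ t <= lsum (enc_list L) + 3).
Proof.
move=> hx hl hL; rewrite /MEM; apply: wp_assign_seq; apply: wp_assign_seq.
set s1 := upd _ rFound _.
apply: wp_weaken; last first.
  apply: (@wp_while _ _ (MEM_inv s x L) (fun s2 => lsum (s2 rRest))).
    by split; [rewrite /s1; frm | exists [::], L; rewrite /s1 /= hL].
  by move=> s2; apply: MEM_inv_step.
move=> t s' [[fr [L1 [L2 [eL [hRest hFound]]]]] [Hnil ht]].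
case: L2 eL hRest => [|? ?] eL hRest; last by rewrite /= hRest in Hnil.
rewrite cats0 in eL; subst L1.
split; first exact: hFound.
split; first by move=> q hq; apply: fr.
by move: ht; rewrite /s1 /= hL; lia.
Qed.

Fixpoint decn (t : tree) : nat :=
  match t with TCons b r => (b != TNil) + 2 * decn r | TNil => 0 end.

Lemma bits_dec fuel n : n <= fuel -> decn (enc_list (map enc_bool (bits fuel n))) = n.
Proof.
elim: fuel n => [|f IH] n hn /=; first by case: n hn.
case: eqP => [->|hn0] //=.
have hd := odd_double_half n; rewrite -mul2n in hd.
rewrite IH; last by move: hd hn0 hn; case: (odd n) => /=; lia.
by move: hd; case: (odd n) => /=; lia.
Qed.

Lemma enc_nat_inj : injective enc_nat.
Proof. by move=> m n e; rewrite -(bits_dec (leqnn m)) -(bits_dec (leqnn n)) -/(enc_nat m) e. Qed.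

Lemma enc_list_inj : injective enc_list.
Proof. by elim=> [|a l IH] [|b l'] //= [-> /IH ->]. Qed.

Lemma enc_fact_inj : injective enc_fact.
Proof.
by move=> [i l] [j l'] [/enc_nat_inj -> /enc_list_inj /(inj_map enc_nat_inj) ->].
Qed.

Definition isF (p : form) := if p is FFalse then true else false.
Definition isT (p : form) := if p is FTrue then true else false.

Definition sand (a b : form) : form :=
  if isF a then FFalse else if isF b then FFalse else
  if isT a then b else if isT b then a else FAnd a b.
Definition sor (a b : form) : form :=
  if isT a then FTrue else if isT b then FTrue else
  if isF a then b else if isF b then a else FOr a b.

Lemma feval_sand nu a b : feval nu (sand a b) = feval nu a && feval nu b.
Proof. by case: a; case: b => *; rewrite /sand /= ?andbT ?andbF. Qed.

Lemma feval_sor nu a b : feval nu (sor a b) = feval nu a || feval nu b.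
Proof. by case: a; case: b => *; rewrite /sor /= ?orbT ?orbF. Qed.

Lemma sand_cases a b :
  [\/ sand a b = FFalse, sand a b = a, sand a b = b | sand a b = FAnd a b].
Proof. by case: a; case: b => *; rewrite /sand /=; auto using Or41, Or42, Or43, Or44. Qed.

Lemma sor_cases a b :
  [\/ sor a b = FTrue, sor a b = a, sor a b = b | sor a b = FOr a b].
Proof. by case: a; case: b => *; rewrite /sor /=; auto using Or41, Or42, Or43, Or44. Qed.

Lemma occ_sand a b : subseq (occ (sand a b)) (occ a ++ occ b).
Proof.
case: (sand_cases a b) => ->;
  first [exact: subseq_refl | exact: prefix_subseq | exact: suffix_subseq | exact: sub0seq].
Qed.

Lemma occ_sor a b : subseq (occ (sor a b)) (occ a ++ occ b).
Proof.
case: (sor_cases a b) => ->;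
  first [exact: subseq_refl | exact: prefix_subseq | exact: suffix_subseq | exact: sub0seq].
Qed.

Fixpoint const_free (p : form) : bool :=
  match p with
  | FVar _ => true
  | FAnd a b | FOr a b => const_free a && const_free b
  | _ => false
  end.

Definition normal (p : form) := isT p || isF p || const_free p.

Lemma normal_nonconst a : normal a -> isT a = false -> isF a = false -> const_free a.
Proof. by rewrite /normal => h ht hf; move: h; rewrite ht hf. Qed.

Lemma normal_sand a b : normal a -> normal b -> normal (sand a b).
Proof.
move=> na nb; rewrite /sand.
case ha: (isF a) => //; case hb: (isF b) => //; case ta: (isT a) => //; case tb: (isT b) => //.
by rewrite /normal /= (normal_nonconst na) // (normal_nonconst nb).
Qed.

Lemma normal_sor a b : normal a -> normal b -> normal (sor a b).
Proof.
move=> na nb; rewrite /sor.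
case ta: (isT a) => //; case tb: (isT b) => //; case ha: (isF a) => //; case hb: (isF b) => //.
by rewrite /normal /= (normal_nonconst na) // (normal_nonconst nb).
Qed.

Lemma normal_const_free p f : normal p -> f \in occ p -> const_free p.
Proof. by case: p. Qed.

Lemma feval_ext (nu nu' : fact -> bool) p :
  {in occ p, nu =1 nu'} -> feval nu p = feval nu' p.
Proof.
elim: p => [g|a IHa b IHb|a IHa b IHb||] //= h; first by apply: h; rewrite mem_seq1.
all: by rewrite IHa ?IHb // => f hf; apply: h; rewrite mem_cat hf ?orbT.
Qed.

Lemma const_free_eval (nu : fact -> bool) (c : bool) p :
  const_free p -> {in occ p, forall g, nu g = c} -> feval nu p = c.
Proof.
elim: p => [g|a IHa b IHb|a IHa b IHb||] //= hc h; first by apply: h; rewrite mem_seq1.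
all: case/andP: hc => ca cb; rewrite IHa ?IHb ?andbb ?orbb //.
all: by move=> f hf; apply: h; rewrite mem_cat hf ?orbT.
Qed.

Definition setv (nu : fact -> bool) (f : fact) (v : bool) : fact -> bool :=
  fun g => if g == f then v else nu g.
Definition pin (nu : fact -> bool) (l : seq fact) (c : bool) : fact -> bool :=
  fun g => if g \in l then c else nu g.

Lemma pin_spec a b nu f (c : bool) :
  const_free b -> ~~ has (mem (occ a)) (occ b) -> f \in occ a ->
  (forall v, feval (setv (pin nu (occ b) c) f v) a = feval (setv nu f v) a) /\
  (forall v, feval (setv (pin nu (occ b) c) f v) b = c).
Proof.
move=> cb dab fa; have notb g : g \in occ a -> (g \in occ b) = false.
  by move=> ga; apply/negP => gb; case/hasP: dab; exists g.
split => v.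
  by apply: feval_ext => g ga; rewrite /setv /pin notb //; case: (g == f).
apply: const_free_eval => // g gb; rewrite /setv /pin gb.
by case: eqP => // e; rewrite e notb in gb.
Qed.

Lemma essential p f : const_free p -> uniq (occ p) -> f \in occ p ->
  exists nu, feval (setv nu f true) p && ~~ feval (setv nu f false) p.
Proof.
elim: p => [g|a IHa b IHb|a IHa b IHb||] //=.
- by move=> _ _; rewrite mem_seq1 => /eqP ->; exists (fun _ => true); rewrite /setv eqxx.
all: move=> /andP [ca cb]; rewrite cat_uniq => /and3P [ua dab ub].
all: have dba : ~~ has (mem (occ b)) (occ a) by rewrite has_sym.
all: rewrite mem_cat => /orP [hf|hf].
- have [nu hnu] := IHa ca ua hf; have [ea eb] := pin_spec nu true cb dab hf.
  by exists (pin nu (occ b) true); rewrite !ea !eb !andbT.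
- have [nu hnu] := IHb cb ub hf; have [eb ea] := pin_spec nu true ca dba hf.
  by exists (pin nu (occ a) true); rewrite !ea !eb.
- have [nu hnu] := IHa ca ua hf; have [ea eb] := pin_spec nu false cb dab hf.
  by exists (pin nu (occ b) false); rewrite !ea !eb !orbF.
- have [nu hnu] := IHb cb ub hf; have [eb ea] := pin_spec nu false ca dba hf.
  by exists (pin nu (occ a) false); rewrite !ea !eb.
Qed.

(* Hence a normal read-once formula has minimal length among all equivalent
   formulas: each of its variables must occur in any equivalent formula. *)
Lemma read_once_minimal p psi : normal p -> uniq (occ p) ->
  (forall nu, feval nu p = feval nu psi) -> len p <= len psi.
Proof.
move=> np up epsi.
have sub : {subset occ p <= undup (occ psi)}.
  move=> f hf; rewrite mem_undup; apply/negPn/negP => hfn.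
  have [nu /andP [h1 h2]] := essential (normal_const_free np hf) up hf.
  have indep v : feval (setv nu f v) psi = feval (setv nu f true) psi.
    by apply: feval_ext => g hg; rewrite /setv; case: eqP => // eg; rewrite -eg hg in hfn.
  by move: h2; rewrite epsi indep -epsi h1.
exact: leq_trans (uniq_leq_size up sub) (size_undup _).
Qed.

Lemma read_once_len p : uniq (occ p) -> len p = nvar p.
Proof. by move=> up; rewrite /len /nvar undup_id. Qed.

Definition disj_over (g : nat -> form) (z : form) (l : seq nat) : form :=
  foldl (fun acc a => sor (g a) acc) z l.

Lemma feval_disj_over nu g z l :
  feval nu (disj_over g z l) = feval nu z || has (fun a => feval nu (g a)) l.
Proof.
elim: l z => [|a l IH] z /=; first by rewrite orbF.
by rewrite IH feval_sor orbA (orbC (feval nu (g a))).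
Qed.

Lemma normal_disj_over g z l :
  normal z -> {in l, forall a, normal (g a)} -> normal (disj_over g z l).
Proof.
elim: l z => [|a l IH] z //= hz hg.
apply: IH => [|b hb]; last by apply: hg; rewrite inE hb orbT.
by apply: normal_sor => //; apply: hg; rewrite mem_head.
Qed.

Lemma occ_disj_over g z l f : f \in occ (disj_over g z l) ->
  f \in occ z \/ exists2 a, a \in l & f \in occ (g a).
Proof.
elim: l z => [|a l IH] z /=; first by left.
move=> /IH [|[b hb hf]]; last by right; exists b => //; rewrite inE hb orbT.
move=> /(mem_subseq (occ_sor _ _)); rewrite mem_cat => /orP [h|h]; last by left.
by right; exists a => //; rewrite mem_head.
Qed.

Lemma uniq_disj_over g (K : fact -> nat) z l :
  uniq (occ z) -> uniq l -> {in occ z, forall f, K f \notin l} ->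
  {in l, forall a, uniq (occ (g a)) /\ {in occ (g a), forall f, K f = a}} ->
  uniq (occ (disj_over g z l)).
Proof.
elim: l z => [|a l IH] z //= hz /andP [hal hl] hK hg.
have [ga gK] := hg a (mem_head _ _).
apply: IH => //.
- apply: (subseq_uniq (occ_sor _ _)); rewrite cat_uniq ga hz andbT /=.
  apply/hasPn => f hf; apply/negP => hfa.
  by have := hK f hf; rewrite (gK f hfa) mem_head.
- move=> f /(mem_subseq (occ_sor _ _)); rewrite mem_cat => /orP [h|h].
    by rewrite (gK f h).
  by have := hK f h; rewrite inE negb_or => /andP [].
- by move=> b hb; apply: hg; rewrite inE hb orbT.
Qed.

Lemma uniq_sand a b (P1 P2 : fact -> Prop) :
  uniq (occ a) -> uniq (occ b) -> {in occ a, forall f, P1 f} ->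
  {in occ b, forall f, P2 f} -> (forall f, P1 f -> P2 f -> False) ->
  uniq (occ (sand a b)).
Proof.
move=> ua ub h1 h2 h12; apply: (subseq_uniq (occ_sand _ _)).
rewrite cat_uniq ua ub andbT /=; apply/hasPn => f hf; apply/negP => hf'.
exact: (h12 f (h1 f hf') (h2 f hf)).
Qed.

(* Query plans.  [PLeaf i] is atom [i] instantiated by the current
   assignment, [POr x p] the disjunction of [p] over all values of [x] in
   the active domain; a plan evaluates to a formula over the facts of D. *)
Inductive plan :=
| PLeaf of nat
| PAnd of plan & plan
| POr of nat & plan
| PTrue.

Definition updf (rho : nat -> nat) (x a : nat) : nat -> nat :=
  fun y => if y == x then a else rho y.

Fixpoint evalp (Q : query) (D : database) (dom : seq nat) (p : plan) (rho : nat -> nat) : form :=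
  match p with
  | PLeaf i => let f := (i, map rho (atom Q i)) in if f \in D then FVar f else FFalse
  | PAnd p1 p2 => sand (evalp Q D dom p1 rho) (evalp Q D dom p2 rho)
  | POr x p1 => disj_over (fun a => evalp Q D dom p1 (updf rho x a)) FFalse dom
  | PTrue => FTrue
  end.

(* Number of atoms containing [y]; in a hierarchical query a variable of
   maximal count occurs in every atom that shares a variable with it. *)
Definition cnt (Q : query) (y : nat) : nat := count (at_ Q y) (iota 0 (natoms Q)).

Definition pickmax (Q : query) (l : seq nat) : nat :=
  foldr (fun y b => if cnt Q b <= cnt Q y then y else b) (head 0 l) l.

Definition leaves (G : seq nat) : plan := foldr (fun i p => PAnd (PLeaf i) p) PTrue G.

Definition ground (Q : query) (V : seq nat) (i : nat) := all (fun y => y \in V) (atom Q i).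

Fixpoint mkplan (Q : query) (fuel : nat) (S V : seq nat) : plan :=
  match fuel with
  | 0 => PTrue
  | f.+1 =>
    let G := [seq i <- S | ground Q V i] in
    let R := [seq i <- S | ~~ ground Q V i] in
    let U := [seq y <- flatten (map (atom Q) R) | y \notin V] in
    if U is [::] then leaves G else
    let x := pickmax Q U in
    PAnd (leaves G)
      (PAnd (POr x (mkplan Q f [seq i <- R | x \in atom Q i] (x :: V)))
            (mkplan Q f [seq i <- R | x \notin atom Q i] V))
  end.

Lemma pickmax_spec Q l : l != [::] ->
  pickmax Q l \in l /\ forall y, y \in l -> cnt Q y <= cnt Q (pickmax Q l).
Proof.
rewrite /pickmax; case: l => [|d l] // _.
suff : let r := foldr (fun y b => if cnt Q b <= cnt Q y then y else b) d (d :: l) in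
  (r = d \/ r \in d :: l) /\ forall y, y \in d :: l -> cnt Q y <= cnt Q r.
  by move=> /= [[->|h] hmax]; split => //; rewrite mem_head.
elim: (d :: l) => [|z s [IH1 IH3]] /=; first by split; [left|].
case: ifP => h.
  split; first by right; rewrite mem_head.
  by move=> y; rewrite inE => /orP [/eqP ->|hy] //; have := IH3 y hy; lia.
split; first by case: IH1 => [->|hh]; [left|right; rewrite inE hh orbT].
by move=> y; rewrite inE => /orP [/eqP ->|hy]; [lia|exact: IH3].
Qed.

Lemma count_le (p q : pred nat) l :
  (forall i, i \in l -> p i -> q i) -> count p l <= count q l.
Proof.
elim: l => [|z l IH] //= hpq.
have h1 : count p l <= count q l by apply: IH => i hi; apply: hpq; rewrite inE hi orbT.
have h2 : (p z : nat) <= q z.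
  by case hz: (p z) => //; rewrite (hpq z (mem_head _ _) hz).
lia.
Qed.

Lemma count_lt (p q : pred nat) l :
  (forall i, i \in l -> p i -> q i) -> (exists2 i, i \in l & q i && ~~ p i) ->
  count p l < count q l.
Proof.
elim: l => [|z l IH] /= hpq [i]; first by [].
rewrite inE => /orP [/eqP ->|hi] hq.
  move: hq => /andP [-> /negbTE ->].
  have : count p l <= count q l by apply: count_le => j hj; apply: hpq; rewrite inE hj orbT.
  lia.
have h1 : count p l < count q l.
  by apply: IH; [move=> j hj; apply: hpq; rewrite inE hj orbT|exists i].
have h2 : (p z : nat) <= q z.
  by case hz: (p z) => //; rewrite (hpq z (mem_head _ _) hz).
lia.
Qed.

Lemma hier_sep Q x y j k : hierarchical Q -> cnt Q y <= cnt Q x ->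
  j < natoms Q -> k < natoms Q -> x \in atom Q j -> y \in atom Q j -> y \in atom Q k ->
  x \in atom Q k.
Proof.
move=> H hc hj hk hxj hyj hyk.
case: (H x y) => [hxy|[hyx|hd]].
- apply/negP => hxk.
  have : cnt Q x < cnt Q y.
    apply: count_lt => [i _|]; first exact: hxy.
    exists k; first by rewrite mem_iota.
    by rewrite /at_ hk hyk /= (negbTE (introN idP hxk)).
  lia.
- by have /andP [] := hyx k (ltac:(by rewrite /at_ hk hyk)).
- by case: (hd j); rewrite /at_ hj hxj hyj.
Qed.

Lemma no_unbound_ground Q (V R : seq nat) :
  [seq y <- flatten (map (atom Q) R) | y \notin V] = [::] ->
  (forall i, i \in R -> ~~ ground Q V i) -> R = [::].
Proof.
move=> hU hR; case eR: R => [|j R'] //.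
have /allPn [y hy hyV] := hR j (ltac:(by rewrite eR mem_head)).
have : y \in [seq y <- flatten (map (atom Q) R) | y \notin V].
  by rewrite mem_filter hyV /=; apply/flattenP; exists (atom Q j); rewrite // eR map_f ?mem_head.
by rewrite hU.
Qed.

Lemma pickmax_separates Q (V R : seq nat) y0 U : hierarchical Q ->
  (forall i, i \in R -> i < natoms Q) ->
  [seq y <- flatten (map (atom Q) R) | y \notin V] = y0 :: U ->
  forall y j k, y \notin V -> j \in R -> k \in R -> pickmax Q (y0 :: U) \in atom Q j ->
    y \in atom Q j -> y \in atom Q k -> pickmax Q (y0 :: U) \in atom Q k.
Proof.
move=> hierQ hR hU y j k hyV hj hk hxj hyj hyk.
have [_ xmax] := @pickmax_spec Q (y0 :: U) erefl.
have hc : cnt Q y <= cnt Q (pickmax Q (y0 :: U)).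
  apply: xmax; rewrite -hU mem_filter hyV /=.
  by apply/flattenP; exists (atom Q j); rewrite // map_f.
exact: hier_sep hierQ hc (hR j hj) (hR k hk) hxj hyj hyk.
Qed.

(* Termination measure of the planner: atoms left plus unbound variables. *)
Definition vars Q := undup (flatten (atoms Q)).
Definition vcnt Q (V : seq nat) := count (fun y => y \notin V) (vars Q).

Lemma in_vars Q i y : i < natoms Q -> y \in atom Q i -> y \in vars Q.
Proof.
move=> hi hy; rewrite /vars mem_undup; apply/flattenP; exists (atom Q i) => //.
exact: mem_nth.
Qed.

Lemma vcnt_lt Q V x : x \in vars Q -> x \notin V -> vcnt Q (x :: V) < vcnt Q V.
Proof.
move=> hx hxV; apply: count_lt.
  by move=> i _; rewrite inE negb_or => /andP [].
by exists x => //; rewrite hxV inE eqxx.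
Qed.

Lemma size_filter_lt (p : pred nat) l j : j \in l -> p j -> size [seq i <- l | ~~ p i] < size l.
Proof.
move=> jl pj; rewrite size_filter -(count_predC p l) -[count _ l]/(count (predC p) l).
have : 0 < count p l by rewrite -has_count; apply/hasP; exists j.
lia.
Qed.

Definition fuel0 Q := natoms Q + size (vars Q) + 1.
Definition plan0 Q := mkplan Q (fuel0 Q) (iota 0 (natoms Q)) [::].
Definition theformula Q D dom := evalp Q D dom (plan0 Q) (fun _ => 0).

Lemma measure_step s r t r' v v' fu :
  s + v < fu.+1 -> r <= s -> t <= r -> r' < r -> v' < v -> t + v' < fu /\ r' + v < fu.
Proof. lia. Qed.

Section PlanCorrectness.

Variables (Q : query) (D : database) (dom : seq nat).
Hypothesis hierQ : hierarchical Q.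
Hypothesis dom_uniq : uniq dom.
Hypothesis dom_cover : forall f, f \in D -> forall c, c \in f.2 -> c \in dom.

Definition witnessed (S V : seq nat) (rho : nat -> nat) (nu : fact -> bool) : Prop :=
  exists theta : nat -> nat, (forall y, y \in V -> theta y = rho y) /\
    forall i, i \in S -> (i, map theta (atom Q i)) \in D /\ nu (i, map theta (atom Q i)).

Definition occ_in (S V : seq nat) (rho : nat -> nat) (f : fact) : Prop :=
  f.1 \in S /\ exists th, (forall y, y \in V -> th y = rho y) /\ f.2 = map th (atom Q f.1).

Record realizes (S V : seq nat) (rho : nat -> nat) (phi : form) : Prop := Realizes {
  realizes_sem : forall nu, feval nu phi <-> witnessed S V rho nu;
  realizes_uniq : uniq (occ phi);
  realizes_normal : normal phi;
  realizes_occ : {in occ phi, forall f, occ_in S V rho f} }.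

Lemma witnessed_ext S S' V rho nu :
  S =i S' -> witnessed S V rho nu <-> witnessed S' V rho nu.
Proof.
move=> h; split => -[th [hV hi]]; exists th; split => // i hiS; apply: hi.
  all: by [rewrite h | rewrite -h].
Qed.

Lemma realizes_ext S S' V rho phi : S =i S' -> realizes S V rho phi -> realizes S' V rho phi.
Proof.
move=> h [sem u n o]; split => // [nu|f /o [h1 h2]]; last by split => //; rewrite -h.
by rewrite sem; apply: witnessed_ext.
Qed.

Lemma witnessed_split S A B V rho nu :
  (forall i, (i \in S) = (i \in A) || (i \in B)) ->
  (forall y j k, y \notin V -> j \in A -> k \in B -> y \in atom Q j -> y \in atom Q k -> False) ->
  witnessed S V rho nu <-> witnessed A V rho nu /\ witnessed B V rho nu.
Proof.
move=> hS hdis; split.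
  move=> [th [hV hi]]; split; exists th; split => // i hi'; apply: hi; by rewrite hS hi' ?orbT.
move=> [[th1 [hV1 h1]] [th2 [hV2 h2]]].
pose th y := if has (fun j => y \in atom Q j) A then th1 y else th2 y.
exists th; split.
  by move=> y hy; rewrite /th; case: ifP => _; [apply: hV1|apply: hV2].
move=> i; rewrite hS => /orP [hiA|hiB].
  suff -> : map th (atom Q i) = map th1 (atom Q i) by apply: h1.
  apply/eq_in_map => y hy; rewrite /th; case: ifP => // /hasPn /(_ i hiA).
  by rewrite hy.
suff -> : map th (atom Q i) = map th2 (atom Q i) by apply: h2.
apply/eq_in_map => y hy; rewrite /th; case: ifP => // /hasP [j hj hyj].
case hyV: (y \in V); first by rewrite hV1 // hV2.
by case: (hdis y j i (negbT hyV) hj hiB hyj hy).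
Qed.

Lemma witnessed_or T V x i0 rho nu :
  (forall i, i \in T -> x \in atom Q i) -> i0 \in T -> x \notin V ->
  witnessed T V rho nu <-> exists2 a, a \in dom & witnessed T (x :: V) (updf rho x a) nu.
Proof.
move=> hx hi0 hxV; split.
  move=> [th [hV h]]; exists (th x).
    have [hD _] := h i0 hi0.
    apply: (dom_cover hD) => /=; apply/mapP; exists x => //; exact: hx.
  exists th; split => // y; rewrite inE /updf => /orP [/eqP ->|hy]; first by rewrite eqxx.
  by rewrite ifN ?hV //; apply: contraNneq hxV => <-.
move=> [a ha [th [hV h]]]; exists th; split => // y hy.
by rewrite hV ?inE ?hy ?orbT // /updf ifN //; apply: contraNneq hxV => <-.
Qed.

Lemma leaves_feval G rho nu :
  feval nu (evalp Q D dom (leaves G) rho) <->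
  (forall i, i \in G -> (i, map rho (atom Q i)) \in D /\ nu (i, map rho (atom Q i))).
Proof.
elim: G => [|i G IH] /=; first by split => // _ i.
rewrite feval_sand; split.
  move=> /andP [h1 /IH h2] j; rewrite inE => /orP [/eqP ->|hj]; last exact: h2.
  by move: h1; case: ifP => //= h3 h4.
move=> h; apply/andP; split; last by apply/IH => j hj; apply: h; rewrite inE hj orbT.
by have [h1 h2] := h i (mem_head _ _); rewrite h1.
Qed.

Lemma leaves_occ G rho f :
  f \in occ (evalp Q D dom (leaves G) rho) -> f.1 \in G /\ f.2 = map rho (atom Q f.1).
Proof.
elim: G => [|i G IH] //= /(mem_subseq (occ_sand _ _)); rewrite mem_cat => /orP [|h].
  by case: ifP => //= _; rewrite inE => /eqP -> /=; rewrite mem_head.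
by have [h1 h2] := IH h; rewrite inE h1 orbT.
Qed.

Lemma leaves_realizes G V rho :
  uniq G -> (forall i, i \in G -> ground Q V i) -> realizes G V rho (evalp Q D dom (leaves G) rho).
Proof.
move=> uG hg; split.
- move=> nu; rewrite leaves_feval; split; first by move=> h; exists rho.
  move=> [th [hV h]] i hi.
  suff <- : map th (atom Q i) = map rho (atom Q i) by apply: h.
  by apply/eq_in_map => y hy; apply: hV; have /allP := hg i hi; apply.
- elim: G uG {hg} => [|i G IH] //= /andP [hi hG].
  apply: (subseq_uniq (occ_sand _ _)); rewrite cat_uniq IH // andbT.
  case: ifP => //= _; apply/hasPn => f /leaves_occ [h _]; rewrite ?mem_seq1 //.
  by apply/negP => /eqP hf; rewrite hf /= in h; rewrite h in hi.
- by elim: G {uG hg} => [|i G IH] //=; apply: normal_sand => //; case: ifP.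
- by move=> f /leaves_occ [h1 h2]; split => //; exists rho.
Qed.

Lemma sand_realizes S A B V rho a b :
  (forall i, (i \in S) = (i \in A) || (i \in B)) -> (forall i, i \in A -> i \notin B) ->
  (forall y j k, y \notin V -> j \in A -> k \in B -> y \in atom Q j -> y \in atom Q k -> False) ->
  realizes A V rho a -> realizes B V rho b -> realizes S V rho (sand a b).
Proof.
move=> hS hAB hsep [semA uA nA oA] [semB uB nB oB]; split.
- by move=> nu; rewrite feval_sand (witnessed_split rho nu hS hsep) -semA -semB; split => /andP.
- apply: (@uniq_sand _ _ (fun f => f.1 \in A) (fun f => f.1 \in B)) => //.
  + by move=> f /oA [].
  + by move=> f /oB [].
  + by move=> f /hAB /negP.
- exact: normal_sand.
- move=> f /(mem_subseq (occ_sand _ _)); rewrite mem_cat => /orP [/oA|/oB] [h1 h2].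
  all: by split; rewrite // hS h1 ?orbT.
Qed.

Lemma disj_realizes T V x i0 rho (g : nat -> form) :
  x \notin V -> (forall i, i \in T -> x \in atom Q i) -> i0 \in T ->
  (forall a, realizes T (x :: V) (updf rho x a) (g a)) ->
  realizes T V rho (disj_over g FFalse dom).
Proof.
move=> hxV hTx hi0 hg.
have rho_V th a : (forall y, y \in x :: V -> th y = updf rho x a y) ->
    forall y, y \in V -> th y = rho y.
  by move=> hth y hy; rewrite hth ?inE ?hy ?orbT // /updf ifN //; apply: contraNneq hxV => <-.
split.
- move=> nu; rewrite feval_disj_over (witnessed_or rho nu hTx hi0 hxV) /=.
  split => [/hasP [a ha /(realizes_sem (hg a))]|[a ha /(realizes_sem (hg a)) h]].
    by exists a.
  by apply/hasP; exists a.
- apply: (@uniq_disj_over _ (fun f => nth 0 f.2 (index x (atom Q f.1)))) => // a _.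
  split; first exact: (realizes_uniq (hg a)).
  move=> f /(realizes_occ (hg a)) [h1 [th [hth ->]]].
  rewrite (nth_map 0); last by rewrite index_mem; apply: hTx.
  by rewrite nth_index ?hth ?mem_head ?/updf ?eqxx //; apply: hTx.
- by apply: normal_disj_over => // a _; exact: (realizes_normal (hg a)).
- move=> f /occ_disj_over [//|[a _ /(realizes_occ (hg a)) [h1 [th [hth h2]]]]].
  by split => //; exists th; split => //; apply: rho_V hth.
Qed.

Lemma mkplan_realizes fuel S V rho :
  size S + vcnt Q V < fuel -> (forall i, i \in S -> i < natoms Q) -> uniq S ->
  realizes S V rho (evalp Q D dom (mkplan Q fuel S V) rho).
Proof.
elim: fuel S V rho => [|fu IH] S V rho hm hS uS; first lia.
rewrite /=.
set G := [seq i <- S | ground Q V i]; set R := [seq i <- S | ~~ ground Q V i].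
have hSGR i : (i \in S) = (i \in G) || (i \in R).
  by rewrite !mem_filter; case: (ground Q V i); rewrite /= ?orbF.
have hG i : i \in G -> ground Q V i by rewrite mem_filter => /andP [].
have hGR i : i \in G -> i \notin R by rewrite !mem_filter => /andP [-> _].
have hRS i : i \in R -> i \in S by rewrite mem_filter => /andP [].
have rG := leaves_realizes rho (filter_uniq _ uS) hG.
have sepG y j k : y \notin V -> j \in G -> k \in R -> y \in atom Q j -> y \in atom Q k -> False.
  by move=> hyV /hG /allP hj _ /hj; rewrite (negbTE hyV).
case hU: [seq y <- flatten (map (atom Q) R) | y \notin V] => [|y0 U].
  have eR : R = [::] by apply: (no_unbound_ground hU) => i; rewrite mem_filter => /andP [].
  by apply: realizes_ext rG => i; rewrite hSGR eR orbF.
set x := pickmax Q (y0 :: U).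
have [xU _] := @pickmax_spec Q (y0 :: U) erefl; rewrite -/x in xU.
have sepx := pickmax_separates hierQ (fun i hi => hS i (hRS i hi)) hU; rewrite -/x in sepx.
move: xU; rewrite -hU mem_filter => /andP [hxV /flattenP [s0 /mapP [j0 hj0 ->] hxj0]].
set T := [seq i <- R | x \in atom Q i]; set R' := [seq i <- R | x \notin atom Q i].
have hTR i : i \in T -> i \in R by rewrite mem_filter => /andP [].
have hTx i : i \in T -> x \in atom Q i by rewrite mem_filter => /andP [].
have hR'R i : i \in R' -> i \in R by rewrite mem_filter => /andP [].
have hR'x i : i \in R' -> x \notin atom Q i by rewrite mem_filter => /andP [].
have hRTR' i : (i \in R) = (i \in T) || (i \in R').
  by rewrite !mem_filter; case: (x \in atom Q i); rewrite /= ?orbF.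
have j0T : j0 \in T by rewrite mem_filter hxj0.
have sepT y j k : y \notin V -> j \in T -> k \in R' -> y \in atom Q j -> y \in atom Q k -> False.
  move=> hyV hj hk hyj hyk; have := hR'x k hk.
  by rewrite (sepx y j k hyV (hTR j hj) (hR'R k hk) (hTx j hj) hyj hyk).
have [mT mR'] : size T + vcnt Q (x :: V) < fu /\ size R' + vcnt Q V < fu.
  apply: measure_step hm _ _ (@size_filter_lt (fun i => x \in atom Q i) _ _ hj0 hxj0) _.
  - by rewrite size_filter count_size.
  - by rewrite size_filter count_size.
  - exact: vcnt_lt (in_vars (hS j0 (hRS j0 hj0)) hxj0) hxV.
apply: sand_realizes hSGR hGR sepG rG _.
apply: (sand_realizes hRTR' _ sepT).
- by move=> i /hTx hx; apply/negP => /hR'x; rewrite hx.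
- apply: (disj_realizes hxV hTx j0T) => a.
  by apply: IH mT (fun i hi => hS i (hRS i (hTR i hi))) (filter_uniq _ (filter_uniq _ uS)).
- by apply: IH mR' (fun i hi => hS i (hRS i (hR'R i hi))) (filter_uniq _ (filter_uniq _ uS)).
Qed.

Lemma witnessed_all rho nu : witnessed (iota 0 (natoms Q)) [::] rho nu <-> prov_holds Q D nu.
Proof.
split => [[th [_ h]]|[th h]]; exists th.
  by move=> i hi; apply: h; rewrite mem_iota.
by split => // i; rewrite mem_iota => hi; exact: h.
Qed.

Lemma theformula_minimal :
  minimal_prov Q D (theformula Q D dom) /\ len (theformula Q D dom) = nvar (theformula Q D dom).
Proof.
have [sem u n _] : realizes (iota 0 (natoms Q)) [::] (fun _ => 0) (theformula Q D dom).
  apply: mkplan_realizes; last exact: iota_uniq.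
    rewrite size_iota /fuel0; have : vcnt Q [::] <= size (vars Q) by apply: count_size.
    lia.
  by move=> i; rewrite mem_iota.
have heq : equiv_prov Q D (theformula Q D dom) by move=> nu; rewrite sem witnessed_all.
split; last exact: read_once_len.
split => // psi hpsi; apply: read_once_minimal n u _ => nu.
by apply/idP/idP => [/heq/hpsi|/hpsi/heq].
Qed.

End PlanCorrectness.

Fixpoint cexp (t : tree) : expr :=
  match t with TNil => ENil | TCons a b => ECons (cexp a) (cexp b) end.

Lemma eeval_cexp s t : eeval s (cexp t) = t.
Proof. by elim: t => //= a -> b ->. Qed.

Notation rOut := 34. Notation rArg1 := 36. Notation rArg2 := 38.
Definition alu_temps : pred nat := fun q => q \in [:: rFlag; rOut].

(* Tests on the tag of an encoded formula: [FTrue] (tag 3) is the only tag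
   whose encoding has two nonempty leading cells, [FFalse] (tag 4) the only
   one with three cells. *)
Definition isTe (r : nat) (c : cmd) :=
  IfT rFlag (EHd (EHd (EVar r))) (IfT rFlag (ETl (EHd (EVar r))) c).
Definition isFe (r : nat) (c : cmd) := IfT rFlag (ETl (ETl (EHd (EVar r)))) c.

Definition SANDc : cmd :=
  CSeq (CAssign rOut (ECons (cexp (enc_nat 1)) (ECons (EVar rArg1) (EVar rArg2))))
 (CSeq (isTe rArg2 (CAssign rOut (EVar rArg1)))
 (CSeq (isTe rArg1 (CAssign rOut (EVar rArg2)))
 (CSeq (isFe rArg2 (CAssign rOut (cexp (enc_form FFalse))))
       (isFe rArg1 (CAssign rOut (cexp (enc_form FFalse))))))).

Definition SORc : cmd :=
  CSeq (CAssign rOut (ECons (cexp (enc_nat 2)) (ECons (EVar rArg1) (EVar rArg2))))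
 (CSeq (isFe rArg2 (CAssign rOut (EVar rArg1)))
 (CSeq (isFe rArg1 (CAssign rOut (EVar rArg2)))
 (CSeq (isTe rArg2 (CAssign rOut (cexp (enc_form FTrue))))
       (isTe rArg1 (CAssign rOut (cexp (enc_form FTrue))))))).

Ltac rwh := repeat match goal with H : ?s ?r = enc_form _ |- context [?s ?r] => rewrite H end; simpl.
Ltac alu_step := match goal with
 | |- wp (CSeq (CAssign _ _) _) _ _ => apply: wp_assign_seq
 | |- wp (CSeq _ _) _ _ => apply: wp_seq
 | |- wp (CAssign _ _) _ _ => apply: wp_assign
 | |- wp (isTe _ _) _ _ => rewrite /isTe
 | |- wp (isFe _ _) _ _ => rewrite /isFe
 | |- wp (IfT _ _ _) _ _ => apply: wp_if; simpl; rwh;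
        [ let H := fresh "H" in intro H; try (by case: (H erefl))
        | let H := fresh "H" in intro H; try (discriminate H) ]
 end; rewrite /= ?eeval_cexp.

Definition computes (op : cmd) (F : form -> form -> form) : Prop :=
  forall s A B, s rArg1 = enc_form A -> s rArg2 = enc_form B ->
    wp op s (fun t s' => s' rOut = enc_form (F A B) /\ frame alu_temps s s' /\ t <= 40).

Lemma SANDc_spec : computes SANDc sand.
Proof.
move=> s A B hA hB; rewrite /SANDc.
case: A hA => [?|??|??||] hA; case: B hB => [?|??|??||] hB;
  repeat (alu_step; rewrite ?hA ?hB /=); (split; [by []|split; [frm|lia]]).
Qed.

Lemma SORc_spec : computes SORc sor.
Proof.
move=> s A B hA hB; rewrite /SORc.
case: A hA => [?|??|??||] hA; case: B hB => [?|??|??||] hB;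
  repeat (alu_step; rewrite ?hA ?hB /=); (split; [by []|split; [frm|lia]]).
Qed.

Definition CALL (op : cmd) (a b o : nat) : cmd :=
  CSeq (CAssign rArg1 (EVar a)) (CSeq (CAssign rArg2 (EVar b)) (CSeq op (CAssign o (EVar rOut)))).

Lemma CALL_spec op F a b o s A B (W : pred nat) : computes op F ->
  s a = enc_form A -> s b = enc_form B -> b != rArg1 ->
  W rFlag -> W rOut -> W rArg1 -> W rArg2 -> W o ->
  wp (CALL op a b o) s (fun t s' => s' o = enc_form (F A B) /\ frame W s s' /\ t <= 43).
Proof.
move=> hop hA hB hb w14 w34 w36 w38 wo.
rewrite /CALL; apply: wp_assign_seq; apply: wp_assign_seq; apply: wp_seq.
apply: wp_weaken; last apply: (hop _ A B).
- move=> t s1 [h34 [fr ht]]; apply: wp_assign; split; first by rewrite /= eqxx.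
  split; last by lia.
  apply: frame_upd => //; apply: frame_trans; last first.
    by apply: frame_mono fr => q; rewrite /alu_temps !inE => /orP [] /eqP ->.
  by apply: frame_upd => //; apply: frame_upd.
- exact: hA.
- by rewrite /= (negbTE hb).
Qed.

(* Register layout of compiled plans: query variable [y] lives in the odd
   register [vreg y]; the database is kept in [rDB] and the active domain in
   [rDom]; a plan nested at depth [k] uses the four registers from [40 + 8k]. *)
Notation rDom := 24. Notation rDB := 32.
Definition vreg (y : nat) := (2 * y).+1.
Definition outr (k : nat) := 40 + 8 * k.
Definition auxr (k : nat) := 42 + 8 * k.
Definition lstr (k : nat) := 44 + 8 * k.
Definition oldr (k : nat) := 46 + 8 * k.
Definition ctemps (k : nat) : pred nat := fun q =>
  (q \in [:: rStack; rPair; rL; rR; rBoth; rEq; rFlag; rRest; rFound; rElem; rOut; rArg1; rArg2]) || ((40 + 8 * k <= q) && (q %% 2 == 0)).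

Lemma ctemps_mono k q : ctemps k.+1 q -> ctemps k q.
Proof. rewrite /ctemps !inE; lia. Qed.

Ltac ctl := rewrite /ctemps /mem_temps /teq_temps /alu_temps /outr /auxr /lstr /oldr /vreg ?inE; lia.
Ltac ifs := repeat (rewrite eqxx || (match goal with |- context [if ?a == ?b then _ else _] =>
     rewrite (@ifN _ (a == b)); last by (rewrite /outr /auxr /lstr /oldr /vreg; apply/eqP; lia) end)).

Definition Ctx (D : database) (dom : seq nat) (rho : nat -> nat) (s : store) :=
  (forall y, s (vreg y) = enc_nat (rho y)) /\ s rDB = enc_db D /\ s rDom = enc_list (map enc_nat dom).

Lemma ctx_frame k D dom rho s s' : frame (ctemps k) s s' -> Ctx D dom rho s -> Ctx D dom rho s'.
Proof.
move=> fr [h1 [h2 h3]]; split; [|split].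
- by move=> y; rewrite fr ?h1 //; ctl.
- by rewrite fr //; ctl.
- by rewrite fr //; ctl.
Qed.

Definition argsexp (l : seq nat) : expr := foldr (fun y e => ECons (EVar (vreg y)) e) ENil l.

Lemma eeval_argsexp s l : eeval s (argsexp l) = enc_list (map (fun y => s (vreg y)) l).
Proof. by elim: l => //= y l ->. Qed.

Definition LEAF (Q : query) (i k : nat) : cmd :=
  CSeq (CAssign rOut (ECons (cexp (enc_nat i)) (argsexp (atom Q i))))
 (CSeq (MEM rOut rDB)
 (CSeq (CAssign rArg1 (cexp (enc_form FFalse)))
 (CSeq (IfT rFlag (EVar rFound) (CAssign rArg1 (ECons (cexp (enc_nat 0)) (EVar rOut))))
       (CAssign (outr k) (EVar rArg1))))).

Lemma LEAF_spec Q D dom rho s i k : Ctx D dom rho s ->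
  wp (LEAF Q i k) s (fun t s' => s' (outr k) = enc_form (evalp Q D dom (PLeaf i) rho) /\
     frame (ctemps k) s s' /\ t <= lsum (enc_db D) + 20).
Proof.
move=> [hv [hD hdom]].
rewrite /LEAF; apply: wp_assign_seq; apply: wp_seq.
set f := (i, map rho (atom Q i)).
have h34 : upd s rOut (eeval s (ECons (cexp (enc_nat i)) (argsexp (atom Q i)))) rOut = enc_fact f.
  rewrite /= eeval_cexp eeval_argsexp /enc_fact /f /=; congr (TCons _ (enc_list _)).
  by rewrite -map_comp; apply: eq_map => y /=; rewrite hv.
apply: wp_weaken; last by apply: (@MEM_spec _ _ _ (map enc_fact D)).
move=> t1 s1 [h18 [fr1 ht1]]; rewrite -/(enc_db D) in ht1.
have e34 : s1 rOut = enc_fact f by rewrite fr1.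
move: h18; rewrite h34 (mem_map enc_fact_inj) => h18.
have fr1' : frame (ctemps k) s s1.
  apply: frame_trans; last by apply: frame_mono fr1 => q; rewrite /mem_temps /teq_temps /ctemps !inE; lia.
  by apply: frame_upd; last by ctl.
apply: wp_assign_seq; apply: wp_seq; apply: wp_if => [hne|hne]; rewrite /= h18 in hne.
  apply: wp_assign; apply: wp_assign.
  have fD : f \in D by move: hne; case: (f \in D).
  split; first by rewrite /= eqxx /= e34 -/f fD.
  split; last by lia.
  apply: frame_upd; last by ctl.
by apply: frame_trans fr1' _; frm.
apply: wp_assign.
have fD : f \in D = false by move: hne; case: (f \in D).
split; first by rewrite /= eqxx /= -/f fD.
split; last by lia.
apply: frame_upd; last by ctl.
by apply: frame_trans fr1' _; frm.
Qed.

(* The disjunction [POr x p] at depth [k]: save [x], let it range over the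
   active domain, run [body] (the compiled [p]) for each value and
   accumulate the disjunction of the results in [auxr k]. *)
Definition FOREACH_OR (x k : nat) (body : cmd) : cmd :=
  CSeq (CAssign (oldr k) (EVar (vreg x)))
 (CSeq (CAssign (auxr k) (cexp (enc_form FFalse)))
 (CSeq (CAssign (lstr k) (EVar rDom))
 (CSeq (CWhile (EVar (lstr k))
          (CSeq (CAssign (vreg x) (EHd (EVar (lstr k))))
          (CSeq (CAssign (lstr k) (ETl (EVar (lstr k))))
          (CSeq body
          (CSeq (CALL SORc (outr k.+1) (auxr k) (outr k))
                (CAssign (auxr k) (EVar (outr k))))))))
 (CSeq (CAssign (outr k) (EVar (auxr k)))
       (CAssign (vreg x) (EVar (oldr k))))))).

(* The plan at depth [k] leaves its formula in [outr k]. *)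
Fixpoint compile (Q : query) (p : plan) (k : nat) : cmd :=
  match p with
  | PLeaf i => LEAF Q i k
  | PTrue => CAssign (outr k) (cexp (enc_form FTrue))
  | PAnd p1 p2 =>
      CSeq (compile Q p1 k.+1)
     (CSeq (CAssign (auxr k) (EVar (outr k.+1)))
     (CSeq (compile Q p2 k.+1)
           (CALL SANDc (auxr k) (outr k.+1) (outr k))))
  | POr x p1 => FOREACH_OR x k (compile Q p1 k.+1)
  end.

Fixpoint cost (ML nd : nat) (p : plan) : nat :=
  match p with
  | PLeaf _ => ML + 20
  | PTrue => 1
  | PAnd p1 p2 => cost ML nd p1 + cost ML nd p2 + 50
  | POr _ p1 => nd * (cost ML nd p1 + 50) + 10
  end.

Fixpoint tlen (t : tree) : nat := if t is TCons _ r then (tlen r).+1 else 0.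

Lemma tlen_enc (l : seq tree) : tlen (enc_list l) = size l.
Proof. by elim: l => //= a l ->. Qed.

Section Compiler.

Variables (Q : query) (D : database) (dom : seq nat).

Definition compiles (c : cmd) (p : plan) (k : nat) : Prop :=
  forall s rho, Ctx D dom rho s ->
    wp c s (fun t s' => s' (outr k) = enc_form (evalp Q D dom p rho) /\
      frame (ctemps k) s s' /\ t <= cost (lsum (enc_db D)) (size dom) p).

Lemma compiles_and p1 p2 k : compiles (compile Q p1 k.+1) p1 k.+1 ->
  compiles (compile Q p2 k.+1) p2 k.+1 -> compiles (compile Q (PAnd p1 p2) k) (PAnd p1 p2) k.
Proof.
move=> IH1 IH2 s rho hc.
rewrite /=; apply: wp_seq; apply: wp_weaken; last exact: IH1 hc.
move=> t1 s1 [o1 [fr1 ht1]]; apply: wp_assign_seq.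
set s2 := upd s1 (auxr k) _.
have fr12 : frame (ctemps k) s s2.
  by apply: frame_upd; [apply: frame_mono fr1; apply: ctemps_mono | ctl].
apply: wp_seq; apply: wp_weaken; last exact: IH2 (ctx_frame fr12 hc).
move=> t2 s3 [o2 [fr2 ht2]].
apply: wp_weaken; last apply: (@CALL_spec _ sand _ _ _ s3 (evalp Q D dom p1 rho) (evalp Q D dom p2 rho) (ctemps k)).
- move=> t3 s4 [o4 [fr4 ht4]]; split => //; split; last by lia.
  apply: frame_trans fr4; apply: frame_trans fr12 _.
  by apply: frame_mono fr2; apply: ctemps_mono.
- exact: SANDc_spec.
- by rewrite fr2; [rewrite /s2 /= eqxx | ctl].
- exact: o2.
all: by [rewrite /outr; lia | ctl].
Qed.

Lemma ctx_bind rho s s2 x a k v : Ctx D dom rho s ->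
  (forall q, ~~ ctemps k q -> q != vreg x -> s2 q = s q) ->
  Ctx D dom (updf rho x a) (upd (upd s2 (vreg x) (enc_nat a)) (lstr k) v).
Proof.
move=> [hv [hD hdom]] f2; split; [|split].
- move=> y; rewrite /updf; case: eqP => [->|nyx]; first by rewrite /=; ifs.
  have hny : vreg y != vreg x by rewrite /vreg; apply/eqP; lia.
  by rewrite /=; ifs; rewrite f2 ?hv //; ctl.
- by rewrite /=; ifs; rewrite f2 //; ctl.
- by rewrite /=; ifs; rewrite f2 //; ctl.
Qed.

Definition or_inv (x k : nat) (g : nat -> form) (s s2 : store) : Prop :=
  (forall q, ~~ ctemps k q -> q != vreg x -> s2 q = s q) /\
  s2 (oldr k) = s (vreg x) /\ exists pre rest, dom = pre ++ rest /\
    s2 (lstr k) = enc_list (map enc_nat rest) /\ s2 (auxr k) = enc_form (disj_over g FFalse pre).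

Definition Wsor k : pred nat :=
  fun q => (q \in [:: rFlag; rOut; rArg1; rArg2]) || (q == outr k).

Lemma or_inv_step x p k rho s (c := compile Q p k.+1) :
  compiles c p k.+1 -> Ctx D dom rho s ->
  let g := fun a => evalp Q D dom p (updf rho x a) in
  forall s2, or_inv x k g s s2 -> eeval s2 (EVar (lstr k)) <> TNil ->
  wp (CSeq (CAssign (vreg x) (EHd (EVar (lstr k))))
     (CSeq (CAssign (lstr k) (ETl (EVar (lstr k))))
     (CSeq c (CSeq (CALL SORc (outr k.+1) (auxr k) (outr k)) (CAssign (auxr k) (EVar (outr k))))))) s2
    (fun t s' => or_inv x k g s s' /\
       t.+1 + (cost (lsum (enc_db D)) (size dom) p + 50) * tlen (s' (lstr k)) <=
       (cost (lsum (enc_db D)) (size dom) p + 50) * tlen (s2 (lstr k))).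
Proof.
move=> IH ctx g s2 [f2 [o2 [pre [rest [ed [l2 a2]]]]]] hne.
case: rest ed l2 => [|a rest] ed l2; first by rewrite /= l2 in hne.
apply: wp_assign_seq; apply: wp_assign_seq.
set s4 := upd (upd s2 (vreg x) _) (lstr k) _.
have c4 : Ctx D dom (updf rho x a) s4 by rewrite /s4 /= l2 /=; exact: ctx_bind ctx f2.
apply: wp_seq; apply: wp_weaken; last exact: IH c4.
move=> t5 s5 [o5 [fr5 ht5]]; apply: wp_seq.
apply: wp_weaken; last apply: (@CALL_spec _ sor _ _ _ s5 (g a) (disj_over g FFalse pre) (Wsor k)).
- move=> t6 s6 [o6 [fr6 ht6]]; apply: wp_assign.
  set s7 := upd s6 _ _.
  have k5 q : ~~ ctemps k.+1 q -> ~~ Wsor k q -> q != auxr k -> s7 q = s4 q.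
    by move=> h1 h2 h3; rewrite /s7 /= (negbTE h3) fr6 // fr5.
  split; last first.
    rewrite l2 /= k5; [|ctl|rewrite /Wsor !inE; ctl|rewrite /lstr /auxr; apply/eqP; lia].
    by rewrite /s4 /=; ifs; rewrite l2 /= !tlen_enc mulnS; lia.
  split.
    move=> q hq hqx.
    rewrite k5; [|by apply: contra hq; apply: ctemps_mono|by apply: contra hq; rewrite /Wsor !inE; ctl|by apply: contraNneq hq => ->; ctl].
    by rewrite /s4 /= !ifN //; [exact: f2|apply: contraNneq hq => ->; ctl].
  split.
    rewrite k5; [|ctl|rewrite /Wsor !inE; ctl|rewrite /oldr /auxr; apply/eqP; lia].
    by rewrite /s4 /=; ifs.
  exists (pre ++ [:: a]), rest; split; first by rewrite ed -catA.
  split; last by rewrite /s7 /= eqxx o6 /disj_over foldl_cat.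
  rewrite k5; [|ctl|rewrite /Wsor !inE; ctl|rewrite /lstr /auxr; apply/eqP; lia].
  by rewrite /s4 /=; ifs; rewrite l2.
- exact: SORc_spec.
- exact: o5.
- by rewrite fr5; [rewrite /s4 /=; ifs | ctl].
- by rewrite /outr.
all: by rewrite /Wsor ?eqxx ?orbT.
Qed.

Lemma compiles_or x p k : compiles (compile Q p k.+1) p k.+1 ->
  compiles (compile Q (POr x p) k) (POr x p) k.
Proof.
move=> IH s rho hc; have [_ [_ hdom]] := hc.
rewrite /= /FOREACH_OR; do 3 apply: wp_assign_seq.
set s1 := upd (upd (upd s (oldr k) _) (auxr k) _) (lstr k) _.
set g := fun a => evalp Q D dom p (updf rho x a).
apply: wp_seq; apply: wp_weaken; last first.
  apply: (@wp_while _ _ (or_inv x k g s)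
     (fun s2 => (cost (lsum (enc_db D)) (size dom) p + 50) * tlen (s2 (lstr k)))).
    split.
      move=> q hq hqx; rewrite /s1 /=; ifs; rewrite !ifN //; apply/eqP => e; move: hq; rewrite e; ctl.
    split; first by rewrite /s1 /=; ifs.
    exists [::], dom; split => //; split; first by rewrite /s1 /= eqxx hdom.
    by rewrite /s1 /=; ifs.
  exact: or_inv_step.
move=> t2 s2 [[f2 [o2 [pre [rest [ed [l2 a2]]]]]] [hnil ht2]].
case: rest ed l2 => [|? ?] ed l2; last by rewrite /= l2 in hnil.
rewrite cats0 in ed; subst pre.
apply: wp_assign_seq; apply: wp_assign.
split; first by rewrite /=; ifs; rewrite a2.
split.
  move=> q hq; rewrite /=; case: (eqVneq q (vreg x)) => [->|hqx]; first by ifs; exact: o2.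
  by rewrite ifN; [exact: f2 | apply: contraNneq hq => ->; ctl].
by move: ht2; rewrite /s1 /=; ifs; rewrite hdom tlen_enc size_map; lia.
Qed.

Lemma compile_spec p k : compiles (compile Q p k) p k.
Proof.
elim: p k => [i|p1 IH1 p2 IH2|x p1 IH1|] k.
- by move=> s rho; exact: LEAF_spec.
- exact: compiles_and.
- exact: compiles_or.
- move=> s rho _; apply: wp_assign; split; first by rewrite /= eqxx.
  by split => //; apply: frame_upd; [exact: frame_refl | ctl].
Qed.

End Compiler.

Definition domAdd (acc : seq nat) (c : nat) := if c \in acc then acc else c :: acc.
Definition domStep (acc : seq nat) (f : fact) := foldl domAdd acc f.2.
Definition domOf (D : database) : seq nat := foldl domStep [::] D.
Definition allc (D : database) : seq nat := flatten (map snd D).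

Lemma domAdd_uniq acc l : uniq acc -> uniq (foldl domAdd acc l).
Proof.
elim: l acc => [|c l IH] acc //= u; apply: IH; rewrite /domAdd; case: ifP => //= ->; by rewrite u.
Qed.

Lemma domAdd_mem acc l y : (y \in foldl domAdd acc l) = (y \in acc) || (y \in l).
Proof.
elim: l acc => [|c l IH] acc /=; first by rewrite orbF.
rewrite IH /domAdd inE.
case h: (c \in acc); case e: (y == c); rewrite ?inE ?e /= ?orbT ?orbF //.
by move/eqP: e => ->; rewrite h.
Qed.

Lemma domStep_gen (D : database) acc : uniq acc ->
  uniq (foldl domStep acc D) /\ forall y, (y \in foldl domStep acc D) = (y \in acc) || (y \in allc D).
Proof.
elim: D acc => [|f D IH] acc u /=; first by split => // y; rewrite orbF.
have [u' h'] := IH _ (domAdd_uniq f.2 u).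
by split => // y; rewrite h' domAdd_mem /allc /= mem_cat orbA.
Qed.

Lemma domOf_uniq D : uniq (domOf D). Proof. by have [] := @domStep_gen D [::] erefl. Qed.

Lemma domOf_mem D y : (y \in domOf D) = (y \in allc D).
Proof. by have [_ ->] := @domStep_gen D [::] erefl. Qed.

Lemma domOf_cover (D : database) : forall f, f \in D -> forall c, c \in f.2 -> c \in domOf D.
Proof. by move=> f hf c hc; rewrite domOf_mem; apply/flattenP; exists f.2 => //; exact: map_f. Qed.

Lemma size_le_enc (l : seq tree) : size l <= tree_size (enc_list l).
Proof. elim: l => //= a l IH; lia. Qed.

Lemma mem_le_enc (l : seq tree) t : t \in l -> tree_size t <= tree_size (enc_list l).
Proof. elim: l => //= a l IH; rewrite inE => /orP [/eqP ->|/IH]; lia. Qed.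

Lemma allc_size D : size (allc D) <= tree_size (enc_db D).
Proof.
elim: D => //= f D IH; rewrite /allc /= size_cat -/(allc D).
have := size_le_enc (map enc_nat f.2); rewrite size_map; rewrite /enc_db /= -/(enc_db D) in IH *.
rewrite /enc_fact /=; lia.
Qed.

Lemma allc_elem D c : c \in allc D -> tree_size (enc_nat c) <= tree_size (enc_db D).
Proof.
elim: D => //= f D IH; rewrite /allc /= mem_cat -/(allc D) => /orP [h|h].
  by have := mem_le_enc (map_f enc_nat h); rewrite /enc_fact /=; lia.
by have := IH h; rewrite /enc_db /=; lia.
Qed.

Lemma lsum_le (l : seq tree) N : (forall t, t \in l -> tree_size t <= N) ->
  lsum (enc_list l) <= size l * (50 * N + 11).
Proof.
elim: l => //= a l IH h.
have h1 := h a (mem_head _ _).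
have h2 := IH (fun t ht => h t (ltac:(by rewrite inE ht orbT))).
rewrite mulSn; lia.
Qed.

Lemma lsum_size t : lsum t <= 61 * tree_size t.
Proof. by elim: t => //= a _ b IH; lia. Qed.

Definition Mb N := N * (50 * N + 11).

Lemma acc_bound D acc : uniq acc -> {subset acc <= allc D} ->
  lsum (enc_list (map enc_nat acc)) <= Mb (tree_size (enc_db D)).
Proof.
move=> u sub.
have h1 : size acc <= tree_size (enc_db D) by exact: leq_trans (uniq_leq_size u sub) (allc_size D).
have : lsum (enc_list (map enc_nat acc)) <= size acc * (50 * tree_size (enc_db D) + 11).
  by rewrite -(size_map enc_nat); apply: lsum_le => t /mapP [c hc ->]; apply: allc_elem; exact: sub.
by rewrite /Mb => h; apply: leq_trans h _; exact: leq_mul.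
Qed.

Notation rFacts := 22. Notation rConsts := 26. Notation rConst := 28. Notation rNew := 30.
Definition inner_temps : pred nat :=
  fun q => mem_temps q || (q \in [:: rDom; rConsts; rConst; rNew]).
Definition dom_temps : pred nat := fun q => inner_temps q || (q == rFacts).

Definition INNER : cmd :=
  CWhile (EVar rConsts)
   (CSeq (CAssign rConst (EHd (EVar rConsts)))
   (CSeq (CAssign rConsts (ETl (EVar rConsts)))
   (CSeq (MEM rConst rDom)
   (CSeq (CAssign rNew ETT)
   (CSeq (IfT rFlag (EVar rFound) (CAssign rNew ENil))
         (IfT rFlag (EVar rNew) (CAssign rDom (ECons (EVar rConst) (EVar rDom))))))))).

Definition DOM : cmd :=
  CSeq (CAssign rFacts (EVar 0))
 (CSeq (CAssign rDom ENil)
  (CWhile (EVar rFacts)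
    (CSeq (CAssign rConsts (ETl (EHd (EVar rFacts))))
    (CSeq (CAssign rFacts (ETl (EVar rFacts))) INNER)))).

Definition inner_inv (s : store) (l acc : seq nat) (s2 : store) : Prop :=
  frame inner_temps s s2 /\ exists pre rest, l = pre ++ rest /\
   s2 rConsts = enc_list (map enc_nat rest) /\ s2 rDom = enc_list (map enc_nat (foldl domAdd acc pre)).

Lemma inner_inv_step D s l acc s2 : uniq acc -> {subset acc <= allc D} -> {subset l <= allc D} ->
  inner_inv s l acc s2 -> eeval s2 (EVar rConsts) <> TNil ->
  wp (CSeq (CAssign rConst (EHd (EVar rConsts)))
     (CSeq (CAssign rConsts (ETl (EVar rConsts)))
     (CSeq (MEM rConst rDom)
     (CSeq (CAssign rNew ETT)
     (CSeq (IfT rFlag (EVar rFound) (CAssign rNew ENil))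
           (IfT rFlag (EVar rNew) (CAssign rDom (ECons (EVar rConst) (EVar rDom))))))))) s2
    (fun t s' => inner_inv s l acc s' /\
       t.+1 + (Mb (tree_size (enc_db D)) + 20) * tlen (s' rConsts) <=
       (Mb (tree_size (enc_db D)) + 20) * tlen (s2 rConsts)).
Proof.
move=> u sa sl [fr2 [pre [rest [el [h26 h24]]]]] hne.
case: rest el h26 => [|a rest] el h26; first by rewrite /= h26 in hne.
set acc' := foldl domAdd acc pre in h24.
have u' : uniq acc' by apply: domAdd_uniq.
have sa' : {subset acc' <= allc D}.
  by move=> y; rewrite domAdd_mem => /orP [/sa //|hy]; apply: sl; rewrite el mem_cat hy.
have hb := acc_bound u' sa'.
apply: wp_assign_seq; apply: wp_assign_seq; apply: wp_seq.
apply: wp_weaken; last by apply: (@MEM_spec _ _ _ (map enc_nat acc')); rewrite //= h24.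
move=> t1 s3 [h18 [fr3 ht3]]; move: h18; rewrite /= h26 /= (mem_map enc_nat_inj) => h18.
have e26 : s3 rConsts = enc_list (map enc_nat rest) by rewrite fr3 //= h26.
have e24 : s3 rDom = enc_list (map enc_nat acc') by rewrite fr3 //= h24.
have fr23 : frame inner_temps s s3.
  apply: frame_trans; last by apply: frame_mono fr3 => q hq; rewrite /inner_temps hq.
  by apply: frame_upd; [apply: frame_upd|].
have eel : l = (pre ++ [:: a]) ++ rest by rewrite el -catA.
apply: wp_assign_seq; apply: wp_seq.
case ha: (a \in acc').
  apply: wp_if; rewrite /= h18 ha //= => _.
  apply: wp_assign; apply: wp_if; rewrite /= //= => _.
  split; last by rewrite e26 /= tlen_enc mulnS; lia.
  split; first by repeat (apply: frame_upd; last by []); exact: fr23.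
  exists (pre ++ [:: a]), rest; split => //; split; first by rewrite /= e26.
  by rewrite /= e24 foldl_cat /= /domAdd -/acc' ha.
apply: wp_if; rewrite /= h18 ha //= => _.
apply: wp_if; rewrite /= // => _.
apply: wp_assign.
split; last by rewrite /= e26 tlen_enc mulnS; lia.
split; first by repeat (apply: frame_upd; last by []); exact: fr23.
exists (pre ++ [:: a]), rest; split => //; split; first by rewrite /= e26.
by rewrite /= e24 fr3 //= h26 foldl_cat /= /domAdd -/acc' ha.
Qed.

Lemma INNER_spec D s (l acc : seq nat) :
  s rConsts = enc_list (map enc_nat l) -> s rDom = enc_list (map enc_nat acc) ->
  uniq acc -> {subset acc <= allc D} -> {subset l <= allc D} ->
  wp INNER s (fun t s' => s' rDom = enc_list (map enc_nat (foldl domAdd acc l)) /\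
     frame inner_temps s s' /\ t <= (Mb (tree_size (enc_db D)) + 20) * size l + 1).
Proof.
move=> h26 h24 u sa sl.
apply: wp_weaken; last first.
  apply: (@wp_while _ _ (inner_inv s l acc) (fun s2 => (Mb (tree_size (enc_db D)) + 20) * tlen (s2 rConsts))).
    by split => //; exists [::], l.
  by move=> s2; apply: inner_inv_step.
move=> t s' [[fr [pre [rest [el [h26' h24']]]]] [hnil ht]].
case: rest el h26' => [|? ?] el h26'; last by rewrite /= h26' in hnil.
rewrite cats0 in el; subst pre.
split => //; split => //.
by move: ht; rewrite h26 tlen_enc size_map.
Qed.

Fixpoint ftot (C : nat) (t : tree) : nat :=
  match t with
  | TCons f r => C * tlen (match f with TCons _ a => a | TNil => TNil end) + 4 + ftot C r
  | TNil => 0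
  end.

Lemma ftot_enc C (D : database) : ftot C (enc_list (map enc_fact D)) = C * size (allc D) + 4 * size D.
Proof.
elim: D => [|f D IH] /=; first by rewrite muln0.
by rewrite IH /allc /= size_cat tlen_enc size_map -/(allc D) mulnDr; lia.
Qed.

Definition dom_inv (D : database) (s s2 : store) : Prop :=
  frame dom_temps s s2 /\ exists P R, D = P ++ R /\
   s2 rFacts = enc_list (map enc_fact R) /\ s2 rDom = enc_list (map enc_nat (domOf P)).

Lemma DOM_spec D s : s 0 = enc_db D ->
  wp DOM s (fun t s' => s' rDom = enc_list (map enc_nat (domOf D)) /\ frame dom_temps s s' /\
    t <= (Mb (tree_size (enc_db D)) + 20) * tree_size (enc_db D) + 4 * tree_size (enc_db D) + 3).
Proof.
move=> h0; set Ci := Mb (tree_size (enc_db D)) + 20.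
rewrite /DOM; apply: wp_assign_seq; apply: wp_assign_seq.
apply: wp_weaken; last first.
  apply: (@wp_while _ _ (dom_inv D s) (fun s2 => ftot Ci (s2 rFacts))).
    by split; [frm | exists [::], D; rewrite /= h0].
  move=> s2 [fr2 [P [R [eD [h22 h24]]]]] hne.
  case: R eD h22 => [|f R] eD h22; first by rewrite /= h22 in hne.
  apply: wp_assign_seq; apply: wp_assign_seq.
  have [uF mF] := @domStep_gen P [::] erefl.
  apply: wp_weaken; last apply: (@INNER_spec D _ f.2 (domOf P)).
  - move=> t s3 [h24' [fr3 ht3]]; split.
      split.
        apply: frame_trans; last by apply: frame_mono fr3 => q hq; rewrite /dom_temps hq.
        by repeat (apply: frame_upd; last by []); exact: fr2.
      exists (P ++ [:: f]), R; split; first by rewrite eD -catA.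
      split; first by rewrite fr3 //= h22.
      by rewrite h24' /domOf foldl_cat.
    by rewrite fr3 //= h22 /= tlen_enc size_map; move: ht3; rewrite -/Ci; lia.
  - by rewrite /= h22.
  - by rewrite /= h24.
  - exact: uF.
  - move=> y; rewrite mF /= => /flattenP [l /mapP [g hg ->] hy].
    by apply/flattenP; exists g.2 => //; apply: map_f; rewrite eD mem_cat hg.
  - move=> y hy; apply/flattenP; exists f.2 => //.
    by apply: map_f; rewrite eD mem_cat mem_head orbT.
move=> t s' [[fr [P [R [eD [h22 h24]]]]] [hnil ht]].
case: R eD h22 => [|? ?] eD h22; last by rewrite /= h22 in hnil.
rewrite cats0 in eD; subst P.
split; first exact: h24.
split; first by move=> q hq; rewrite fr.
move: ht; rewrite /= h0 /enc_db ftot_enc.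
have := allc_size D; have := size_le_enc (map enc_fact D); rewrite size_map -/(enc_db D).
move=> h1 h2 h3.
have : Ci * size (allc D) <= Ci * tree_size (enc_db D) by apply: leq_mul.
lia.
Qed.

Definition PROG Q := CSeq (CAssign rDB (EVar 0))
  (CSeq DOM (CSeq (compile Q (plan0 Q) 0) (CAssign 0 (EVar (outr 0))))).

(* Polynomial bound on [cost]: the degree is the nesting depth [hc] of
   disjunctions (plus one for the lookups), a constant of the query. *)
Fixpoint Kc (p : plan) : nat :=
  match p with PLeaf _ => 81 | PTrue => 1 | PAnd p1 p2 => Kc p1 + Kc p2 + 50 | POr _ p1 => Kc p1 + 60 end.
Fixpoint hc (p : plan) : nat :=
  match p with PLeaf _ => 1 | PTrue => 0 | PAnd p1 p2 => maxn (hc p1) (hc p2) | POr _ p1 => (hc p1).+1 end.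

Lemma cost_mono ML ML' nd nd' p : ML <= ML' -> nd <= nd' -> cost ML nd p <= cost ML' nd' p.
Proof.
move=> h1 h2; elim: p => //= [i|p1 IH1 p2 IH2|x p1 IH1]; try lia.
have : nd * (cost ML nd p1 + 50) <= nd' * (cost ML' nd' p1 + 50) by apply: leq_mul => //; lia.
lia.
Qed.

Lemma cost_poly N p : 0 < N -> cost (61 * N) N p <= Kc p * N ^ hc p.
Proof.
move=> hN; elim: p => [i|p1 IH1 p2 IH2|x p1 IH1|] /=.
- by rewrite expn1; lia.
- have e1 : N ^ hc p1 <= N ^ maxn (hc p1) (hc p2) by apply: leq_pexp2l => //; apply: leq_maxl.
  have e2 : N ^ hc p2 <= N ^ maxn (hc p1) (hc p2) by apply: leq_pexp2l => //; apply: leq_maxr.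
  have e0 : 1 <= N ^ maxn (hc p1) (hc p2) by rewrite expn_gt0 hN.
  have : Kc p1 * N ^ hc p1 <= Kc p1 * N ^ maxn (hc p1) (hc p2) by apply: leq_mul.
  have : Kc p2 * N ^ hc p2 <= Kc p2 * N ^ maxn (hc p1) (hc p2) by apply: leq_mul.
  by rewrite !mulnDl; lia.
- have e0 : 1 <= N ^ hc p1 by rewrite expn_gt0 hN.
  rewrite expnS.
  have : N * (cost (61 * N) N p1 + 50) <= N * (Kc p1 * N ^ hc p1 + 50) by apply: leq_mul => //; lia.
  have : N * 50 <= N * (N ^ hc p1 * 50) by apply: leq_mul => //; lia.
  by rewrite !mulnDl !mulnDr; lia.
- lia.
Qed.

Lemma dom_cost_cubic N : 0 < N -> Mb N * N + 20 * N + 4 * N + 3 <= 88 * N ^ 3.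
Proof.
move=> hN; rewrite /Mb (_ : N ^ 3 = N * N * N); last by rewrite !expnS expn0 muln1 mulnA.
have h2 : N <= N * N by rewrite -{1}(muln1 N) leq_mul.
have h3 : N * N <= N * N * N by rewrite -{1}(muln1 (N * N)) leq_mul.
by rewrite !mulnDr !mulnDl; nia.
Qed.

Lemma prog_spec Q D :
  wp (PROG Q) (init_store (enc_db D)) (fun t s' =>
    s' 0 = enc_form (theformula Q D (domOf D)) /\
    t <= (90 + Kc (plan0 Q)) * tree_size (enc_db D) ^ (maxn 3 (hc (plan0 Q)))).
Proof.
set N := tree_size (enc_db D).
have hN : 0 < N by rewrite /N; case: (enc_db D).
rewrite /PROG; apply: wp_assign_seq; apply: wp_seq.
apply: wp_weaken; last exact: (@DOM_spec D).
move=> t1 s2 [h24 [fr2 ht1]].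
have c2 : Ctx D (domOf D) (fun _ => 0) s2.
  split; [|split] => //; last by rewrite fr2.
  move=> y; rewrite fr2; last by rewrite /dom_temps /inner_temps /mem_temps /teq_temps /vreg !inE; lia.
  by rewrite /= ifN // /vreg; lia.
apply: wp_seq; apply: wp_weaken; last exact: (compile_spec Q (plan0 Q) 0 c2).
move=> t2 s3 [o3 [fr3 ht2]]; apply: wp_assign.
split; first by rewrite /= o3.
have hdom : size (domOf D) <= N.
  apply: leq_trans (allc_size D); apply: uniq_leq_size; first exact: domOf_uniq.
  by move=> y; rewrite domOf_mem.
have hML : lsum (enc_db D) <= 61 * N by apply: lsum_size.
have hc1 := cost_mono (plan0 Q) hML hdom.
have hc2 := cost_poly (plan0 Q) hN.
set d := maxn 3 (hc (plan0 Q)).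
have e3 : N ^ 3 <= N ^ d by apply: leq_pexp2l => //; apply: leq_maxl.
have eh : N ^ hc (plan0 Q) <= N ^ d by apply: leq_pexp2l => //; apply: leq_maxr.
have hKc : Kc (plan0 Q) * N ^ hc (plan0 Q) <= Kc (plan0 Q) * N ^ d by apply: leq_mul.
have := dom_cost_cubic hN.
by move: ht1; rewrite -/N mulnDl => ht1; rewrite mulnDl; lia.
Qed.

Theorem mainTheorem6 (Q : query) :
  hierarchical Q ->
  (exists (p : cmd) (c d : nat),
     forall D : database, uniq D ->
       exists (t : nat) (out : tree),
         runs p (enc_db D) t out /\
         t <= c * (tree_size (enc_db D)) ^ d /\
         exists phi : form, out = enc_form phi /\ minimal_prov Q D phi) /\
  (exists (p : cmd) (c d : nat),
     forall (D : database) (k : nat), uniq D ->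
       exists (t : nat) (b : bool),
         runs p (TCons (enc_db D) (enc_nat k)) t (enc_bool b) /\
         t <= c * (tree_size (TCons (enc_db D) (enc_nat k))) ^ d /\
         (b = true <-> FACT Q D k)).
Proof.
move=> hierQ.
have hmin D := theformula_minimal hierQ (domOf_uniq D) (@domOf_cover D).
split.
  exists (PROG Q), (90 + Kc (plan0 Q)), (maxn 3 (hc (plan0 Q))) => D _.
  have [t [s' [ex [o ht]]]] := prog_spec Q D.
  exists t, (s' 0); split; first by exists s'.
  by split => //; exists (theformula Q D (domOf D)); split => //; exact: (hmin D).1.
(* The formula is read-once, so (D, k) is always in FACT(Q): answer yes. *)
exists (CAssign 0 ETT), 1, 0 => D k _.
exists 1, true; split; first by eexists; split; [exact: ExAssign | by []].
split; first by rewrite expn0.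
split => // _; have [[hm _] hl] := hmin D.
by exists (theformula Q D (domOf D)); split => //; rewrite hl leq_addr.
Qed.
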